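(* Let $(G,R)$ be a multirooted graph, let $c$ be a domain preserving partial colouring of $(G,R)$, and let $\Gamma$ be the stabiliser of $c$ in $\mathrm{Aut}(G,R)$. Let $A$ and $B$ be moving tuples (with respect to $c$), each with at most $3$ elements. If $A$ has an uncommon neighbour in $B$, then $B$ has an uncommon neighbour in $A$, and there is a bijection $f\colon A\to B$ such that for every $\gamma\in\Gamma$ we have $\gamma|_B = f\circ\gamma|_A\circ f^{-1}$. In particular, every $\gamma\in\Gamma$ that fixes a vertex $v\in A$ also fixes $f(v)\in B$, and vice versa.
   Context: All graphs are simple, connected and locally finite. A multirooted graph $(G,R)$ is a graph $G=(V,E)$ together with a set $R\subseteq V$ of roots; $\mathrm{Aut}(G,R)$ is the group of automorphisms of $G$ fixing every vertex of $R$. A partial colouring is a function $c$ from a set $\mathrm{dom}(c)\subseteq V$ to a set of colours. An automorphism $\gamma$ preserves $c$ if $c(v)=c(\gamma v)$ whenever both are defined; the stabiliser of $c$ is the set of $c$-preserving automorphisms in $\mathrm{Aut}(G,R)$. The colouring $c$ is domain preserving if every $c$-preserving automorphism of $(G,R)$ maps $\mathrm{dom}(c)$ onto itself (in this case the stabiliser is a group). For a domain preserving $c$: a vertex $v\in V\setminus R$ is charted if it is coloured or has a neighbour in $R$; a moving tuple is an orbit of a charted vertex under the stabiliser of $c$. A vertex $w\notin R$ is an uncommon neighbour of a moving tuple $A$ if $w$ is adjacent to some but not all members of $A$. *)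

(* graphs may be infinite (locally finite, connected), so we
   work over an arbitrary vertex type V with a Prop-valued adjacency. *)
From Stdlib Require Import List Relations.
Import ListNotations.
Set Implicit Arguments.

Section Graphs.
Variable V : Type.
Variable adj : V -> V -> Prop.

Definition simple_graph : Prop :=
  (forall v, ~ adj v v) /\ (forall u v, adj u v -> adj v u).

Definition connected_graph : Prop :=
  forall u v, clos_refl_trans V adj u v.

Definition locally_finite : Prop :=
  forall v, exists l : list V, forall w, adj v w -> In w l.

Definition graph_aut (g : V -> V) : Prop :=
  (exists h : V -> V, (forall x, h (g x) = x) /\ (forall y, g (h y) = y)) /\
  (forall u v, adj u v <-> adj (g u) (g v)).

Definition rooted_aut (R : V -> Prop) (g : V -> V) : Prop :=
  graph_aut g /\ (forall r, R r -> g r = r).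

Variable C : Type.
(* a partial colouring is given by its domain dom and a colour function c
   (only its values on dom matter) *)
Definition preserves (dom : V -> Prop) (c : V -> C) (g : V -> V) : Prop :=
  forall v, dom v -> dom (g v) -> c v = c (g v).

Definition stabiliser (R : V -> Prop) (dom : V -> Prop) (c : V -> C)
  (g : V -> V) : Prop :=
  rooted_aut R g /\ preserves dom c g.

Definition domain_preserving (R : V -> Prop) (dom : V -> Prop) (c : V -> C) : Prop :=
  forall g, stabiliser R dom c g ->
    (forall v, dom v -> dom (g v)) /\
    (forall w, dom w -> exists v, dom v /\ g v = w).

Definition charted (R : V -> Prop) (dom : V -> Prop) (v : V) : Prop :=
  ~ R v /\ (dom v \/ exists r, R r /\ adj v r).

Definition moving_tuple (R : V -> Prop) (dom : V -> Prop) (c : V -> C)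
  (A : V -> Prop) : Prop :=
  exists v, charted R dom v /\
    (forall x, A x <-> exists g, stabiliser R dom c g /\ g v = x).

Definition at_most (n : nat) (A : V -> Prop) : Prop :=
  exists l : list V, length l <= n /\ forall x, A x <-> In x l.

Definition uncommon_neighbour (R : V -> Prop) (A : V -> Prop) (w : V) : Prop :=
  ~ R w /\ (exists a, A a /\ adj w a) /\ (exists a, A a /\ ~ adj w a).
End Graphs.

(* The stabiliser Γ acts transitively on each of the moving tuples A and B,
   so every vertex of B has the same number k of neighbours in A and every
   vertex of A the same number m of neighbours in B.  Counting the edges
   between A and B twice gives k|B| = m|A|, and an uncommon neighbour in B
   forces 0 < k < |A|.  With |A|, |B| <= 3 this leaves only |A| = |B| and
   m = k with k = 1 or (k, |A|) = (2, 3).  In the first case the edges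
   between A and B, in the second the non-edges, form a perfect matching;
   being Γ-invariant, this matching is the required Γ-equivariant bijection. *)

From Stdlib Require Import List Relations.
From Stdlib Require Import Classical ClassicalEpsilon Permutation PeanoNat Lia.
Import ListNotations.
Set Implicit Arguments.

Definition indicator (P : Prop) : nat :=
  if excluded_middle_informative P then 1 else 0.

Lemma indicator_true (P : Prop) : P -> indicator P = 1.
Proof. unfold indicator; destruct (excluded_middle_informative P); tauto. Qed.

Lemma indicator_false (P : Prop) : ~ P -> indicator P = 0.
Proof. unfold indicator; destruct (excluded_middle_informative P); tauto. Qed.

Fixpoint countP {T : Type} (P : T -> Prop) (l : list T) : nat :=
  match l with
  | [] => 0
  | x :: l' => indicator (P x) + countP P l'
  end.

Section Counting.
Context {T : Type}.
Implicit Types (P Q : T -> Prop) (l : list T).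

Lemma countP_ext P Q l :
  (forall x, In x l -> P x <-> Q x) -> countP P l = countP Q l.
Proof.
  induction l as [|x l IH]; simpl; intros PQ; auto.
  rewrite IH by auto. f_equal.
  destruct (classic (P x)) as [p|p].
  - rewrite !indicator_true; auto. apply PQ; auto.
  - rewrite !indicator_false; auto. rewrite <- PQ; auto.
Qed.

Lemma countP_compl P l : countP P l + countP (fun x => ~ P x) l = length l.
Proof.
  induction l as [|x l IH]; simpl; auto.
  destruct (classic (P x)) as [p|p].
  - rewrite indicator_true, indicator_false; auto. lia.
  - rewrite indicator_false, indicator_true; auto. lia.
Qed.

Lemma countP_pos P l : 0 < countP P l <-> exists x, In x l /\ P x.
Proof.
  induction l as [|x l IH]; simpl.
  - split; [lia | intros [? [[] _]]].
  - destruct (classic (P x)) as [p|p].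
    + rewrite indicator_true by auto. split; [eauto | lia].
    + rewrite indicator_false by auto. rewrite IH. split.
      * intros [y [? ?]]; eauto.
      * intros [y [[<-|?] ?]]; [contradiction | eauto].
Qed.

Lemma countP_lt_length P l : countP P l < length l <-> exists x, In x l /\ ~ P x.
Proof. rewrite <- countP_pos. pose proof (countP_compl P l). lia. Qed.

Lemma countP_eq1 P l :
  NoDup l -> countP P l = 1 -> exists! x, In x l /\ P x.
Proof.
  induction l as [|x l IH]; simpl; intros ND H1; [lia|].
  inversion ND as [|? ? x_notin ND']; subst.
  destruct (classic (P x)) as [p|p].
  - rewrite indicator_true in H1 by auto.
    exists x. split; [auto|]. intros y [[<-|Iy] Py]; [reflexivity|].
    exfalso. assert (0 < countP P l) by (apply countP_pos; eauto). lia.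
  - rewrite indicator_false in H1 by auto.
    destruct (IH ND' H1) as [y [[Iy Py] uniq]].
    exists y. split; [auto|]. intros z [[<-|Iz] Pz]; [contradiction | auto].
Qed.

Lemma countP_compl_eq1 P l :
  S (countP P l) = length l -> countP (fun x => ~ P x) l = 1.
Proof. pose proof (countP_compl P l). lia. Qed.

Lemma countP_map {U : Type} P (g : U -> T) (l : list U) :
  countP P (map g l) = countP (fun x => P (g x)) l.
Proof. induction l; simpl; auto. Qed.

Lemma countP_perm P l l' : Permutation l l' -> countP P l = countP P l'.
Proof. induction 1; simpl; lia. Qed.

End Counting.

Lemma list_sum_map_const {T : Type} (f : T -> nat) (l : list T) k :
  (forall x, In x l -> f x = k) -> list_sum (map f l) = k * length l.
Proof.
  induction l as [|x l IH]; simpl; intros Hf; [lia|].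
  rewrite Hf, IH by auto. lia.
Qed.

Lemma list_sum_map_add {T : Type} (f g : T -> nat) (l : list T) :
  list_sum (map (fun x => f x + g x) l) = list_sum (map f l) + list_sum (map g l).
Proof. induction l; simpl; lia. Qed.

Lemma sum_countP_swap {U W : Type} (Rl : U -> W -> Prop) (lu : list U) (lw : list W) :
  list_sum (map (fun u => countP (Rl u) lw) lu) =
  list_sum (map (fun w => countP (fun u => Rl u w) lu) lw).
Proof.
  induction lu as [|u lu IH]; simpl.
  - rewrite (@list_sum_map_const _ _ _ 0); auto.
  - rewrite IH, list_sum_map_add. f_equal.
    clear IH; induction lw; simpl; auto.
Qed.

Lemma double_counting {U W : Type} (Rl : U -> W -> Prop) (lu : list U) (lw : list W) k m :
  (forall u, In u lu -> countP (Rl u) lw = k) ->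
  (forall w, In w lw -> countP (fun u => Rl u w) lu = m) ->
  k * length lu = m * length lw.
Proof.
  intros Hk Hm.
  rewrite <- (list_sum_map_const _ _ Hk), <- (list_sum_map_const _ _ Hm).
  apply sum_countP_swap.
Qed.

Lemma at_most_NoDup {T : Type} n (X : T -> Prop) :
  at_most n X -> exists l, NoDup l /\ length l <= n /\ forall x, X x <-> In x l.
Proof.
  intros [l0 [L0 H0]].
  set (dec := fun x y : T => excluded_middle_informative (x = y)).
  exists (nodup dec l0). split; [apply NoDup_nodup|]. split.
  - enough (length (nodup dec l0) <= length l0) by lia.
    apply NoDup_incl_length; [apply NoDup_nodup|].
    intros x; rewrite nodup_In; auto.
  - intros x. rewrite nodup_In. apply H0.
Qed.

Definition degree_matching {T : Type} (k : nat) (Rl : T -> T -> Prop) (x y : T) : Prop :=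
  if Nat.eq_dec k 1 then Rl x y else ~ Rl x y.

Lemma degree_matching_sym {T : Type} k (Rl : T -> T -> Prop) :
  (forall x y, Rl x y -> Rl y x) -> forall x y, degree_matching k Rl x y -> degree_matching k Rl y x.
Proof. unfold degree_matching; intros Rl_sym x y; destruct Nat.eq_dec; auto. Qed.

(* A vertex of degree k into Y has exactly one partner: its unique neighbour
   if k = 1, its unique non-neighbour if k = |Y| - 1. *)
Lemma degree_matching_partner {T : Type} (Rl : T -> T -> Prop) (Y : T -> Prop) lY k x :
  NoDup lY -> (forall y, Y y <-> In y lY) ->
  countP (Rl x) lY = k -> k = 1 \/ S k = length lY ->
  exists! y, Y y /\ degree_matching k Rl x y.
Proof.
  intros ND HY deg k_cases.
  assert (one : countP (degree_matching k Rl x) lY = 1).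
  { unfold degree_matching. destruct (Nat.eq_dec k 1); [exact (eq_trans deg e)|].
    apply countP_compl_eq1. lia. }
  destruct (countP_eq1 _ ND one) as [y [[Iy My] uniq]].
  exists y. split; [split; [apply HY|]; auto|].
  intros z [Yz Mz]. apply uniq. split; [apply HY|]; auto.
Qed.

Lemma small_biregular_degrees nA nB k m :
  nA <= 3 -> nB <= 3 -> 0 < k < nA -> 0 < m -> k * nB = m * nA ->
  nA = nB /\ m = k /\ (k = 1 \/ k = 2 /\ nA = 3).
Proof. intros; destruct nA as [|[|[|[|]]]]; destruct nB as [|[|[|[|]]]]; lia. Qed.

Section Stabiliser.
Variables (V : Type) (adj : V -> V -> Prop) (C : Type) (R dom : V -> Prop) (c : V -> C).
Hypothesis dom_pres : domain_preserving adj R dom c.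

Let Gamma := stabiliser adj R dom c.

Definition stable (X : V -> Prop) : Prop :=
  forall g x, Gamma g -> X x -> X (g x).

Definition invariant (Rl : V -> V -> Prop) : Prop :=
  forall g x y, Gamma g -> (Rl (g x) (g y) <-> Rl x y).

Lemma adj_invariant : invariant adj.
Proof. intros g x y [[[_ g_adj] _] _]. symmetry; apply g_adj. Qed.

Lemma stabiliser_comp g h : Gamma g -> Gamma h -> Gamma (fun x => g (h x)).
Proof.
  intros Sg Sh.
  destruct (dom_pres Sh) as [h_dom _].
  destruct Sg as [[[[gi [gK gKV]] g_adj] g_R] g_col].
  destruct Sh as [[[[hi [hK hKV]] h_adj] h_R] h_col].
  split; [split; [split|]|].
  - exists (fun y => hi (gi y)). split; intros; [rewrite gK, hK | rewrite hKV, gKV]; auto.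
  - intros u v. rewrite (h_adj u v). apply g_adj.
  - intros r Rr. rewrite h_R, g_R; auto.
  - intros x Dx Dghx. rewrite (h_col x Dx (h_dom x Dx)). apply g_col; auto.
Qed.

Lemma stabiliser_inv g :
  Gamma g -> exists g', Gamma g' /\ (forall x, g' (g x) = x) /\ (forall y, g (g' y) = y).
Proof.
  intros Sg. pose proof Sg as [[[[gi [gK gKV]] g_adj] g_R] g_col].
  exists gi. split; [|auto].
  split; [split; [split|]|].
  - exists g; split; auto.
  - intros u v. rewrite (g_adj (gi u) (gi v)), !gKV. reflexivity.
  - intros r Rr. rewrite <- (g_R r Rr) at 1. apply gK.
  - intros x Dx Dgix. symmetry. rewrite <- (gKV x) at 2. apply g_col; rewrite ?gKV; auto.
Qed.

Lemma moving_tuple_stable X : moving_tuple adj R dom c X -> stable X.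
Proof.
  intros [v [_ HX]] h x Sh Xx.
  apply HX in Xx as [g [Sg <-]].
  apply HX. exists (fun y => h (g y)). split; [apply stabiliser_comp|]; auto.
Qed.

Lemma moving_tuple_transitive X x y :
  moving_tuple adj R dom c X -> X x -> X y -> exists g, Gamma g /\ g x = y.
Proof.
  intros [v [_ HX]] Xx Xy.
  apply HX in Xx as [g1 [S1 <-]]. apply HX in Xy as [g2 [S2 <-]].
  destruct (stabiliser_inv S1) as [g1' [S1' [g1K _]]].
  exists (fun z => g2 (g1' z)). split; [apply stabiliser_comp|]; rewrite ?g1K; auto.
Qed.

(* A root r = g v would be fixed by g, forcing v = r by injectivity, yet v is
   charted and hence not a root. *)
Lemma moving_tuple_not_root X x : moving_tuple adj R dom c X -> X x -> ~ R x.
Proof.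
  intros [v [[v_notR _] HX]] Xx Rx.
  apply HX in Xx as [g [Sg <-]].
  destruct Sg as [[[[gi [gK _]] _] g_R] _].
  apply v_notR. rewrite <- (gK v), <- (g_R _ Rx), gK. exact Rx.
Qed.

Lemma stabiliser_permutes X l g :
  stable X -> NoDup l -> (forall x, X x <-> In x l) -> Gamma g ->
  Permutation (map g l) l.
Proof.
  intros X_stable ND HX Sg.
  destruct (stabiliser_inv Sg) as [g' [Sg' [gK gKV]]].
  apply NoDup_Permutation; auto.
  - apply FinFun.Injective_map_NoDup; auto.
    intros x y E. rewrite <- (gK x), <- (gK y), E. reflexivity.
  - intros x. rewrite in_map_iff. split.
    + intros [y [<- Iy]]. apply HX, X_stable, HX; auto.
    + intros Ix. exists (g' x). split; [apply gKV|]. apply HX, X_stable, HX; auto.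
Qed.

Lemma invariant_count_const X Y lY Rl x1 x2 :
  moving_tuple adj R dom c X -> stable Y -> NoDup lY -> (forall y, Y y <-> In y lY) ->
  invariant Rl -> X x1 -> X x2 -> countP (Rl x1) lY = countP (Rl x2) lY.
Proof.
  intros MX Y_stable ND HY Rl_inv X1 X2.
  destruct (moving_tuple_transitive x1 x2 MX X1 X2) as [g [Sg <-]].
  rewrite <- (countP_perm (Rl (g x1)) (stabiliser_permutes Y_stable ND HY Sg)).
  rewrite countP_map. apply countP_ext. intros y _. symmetry. apply Rl_inv; auto.
Qed.

Lemma invariant_degree_matching k Rl : invariant Rl -> invariant (degree_matching k Rl).
Proof.
  unfold degree_matching; intros Rl_inv g x y Sg.
  destruct Nat.eq_dec; rewrite (Rl_inv g x y Sg); tauto.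
Qed.

Lemma equivariant_bijection A B M :
  stable A -> stable B -> invariant M -> (forall x y, M x y -> M y x) ->
  (forall a, A a -> exists! b, B b /\ M a b) ->
  (forall b, B b -> exists! a, A a /\ M b a) ->
  exists f finv : V -> V,
    (forall a, A a -> B (f a)) /\ (forall b, B b -> A (finv b)) /\
    (forall a, A a -> finv (f a) = a) /\ (forall b, B b -> f (finv b) = b) /\
    (forall g, Gamma g -> forall a, A a -> g (f a) = f (g a)).
Proof.
  intros A_stable B_stable M_inv M_sym partnerA partnerB.
  set (f := fun a => epsilon (inhabits a) (fun b => B b /\ M a b)).
  set (finv := fun b => epsilon (inhabits b) (fun a => A a /\ M b a)).
  assert (f_spec : forall a, A a -> B (f a) /\ M a (f a)).
  { intros a Aa. destruct (partnerA a Aa) as [b [Hb _]]. apply epsilon_spec; eauto. }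
  assert (finv_spec : forall b, B b -> A (finv b) /\ M b (finv b)).
  { intros b Bb. destruct (partnerB b Bb) as [a [Ha _]]. apply epsilon_spec; eauto. }
  assert (f_unique : forall a b, A a -> B b -> M a b -> f a = b).
  { intros a b Aa Bb Mab. destruct (partnerA a Aa) as [b' [_ uniq]].
    transitivity b'; [symmetry; apply uniq, f_spec | apply uniq]; auto. }
  assert (finv_unique : forall b a, B b -> A a -> M b a -> finv b = a).
  { intros b a Bb Aa Mba. destruct (partnerB b Bb) as [a' [_ uniq]].
    transitivity a'; [symmetry; apply uniq, finv_spec | apply uniq]; auto. }
  exists f, finv. repeat split.
  - apply f_spec.
  - apply finv_spec.
  - intros a Aa. destruct (f_spec a Aa). apply finv_unique; auto.
  - intros b Bb. destruct (finv_spec b Bb). apply f_unique; auto.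
  - intros g Sg a Aa. destruct (f_spec a Aa) as [Bfa Mafa].
    symmetry. apply f_unique; [apply A_stable | apply B_stable | apply M_inv]; auto.
Qed.

End Stabiliser.

Section UncommonNeighbours.
Variables (V : Type) (adj : V -> V -> Prop) (C : Type) (R dom : V -> Prop) (c : V -> C).
Hypothesis adj_sym : forall u v, adj u v -> adj v u.
Hypothesis dom_pres : domain_preserving adj R dom c.
Variables (A B : V -> Prop) (lA lB : list V).
Hypotheses (MA : moving_tuple adj R dom c A) (MB : moving_tuple adj R dom c B).
Hypotheses (NA : NoDup lA) (NB : NoDup lB).
Hypotheses (HA : forall x, A x <-> In x lA) (HB : forall x, B x <-> In x lB).

Lemma uncommon_neighbour_degrees w :
  length lA <= 3 -> length lB <= 3 -> B w -> uncommon_neighbour adj R A w ->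
  exists k, length lA = length lB /\ 0 < k < length lA /\ (k = 1 \/ k = 2 /\ length lA = 3) /\
    (forall b, B b -> countP (adj b) lA = k) /\ (forall a, A a -> countP (adj a) lB = k).
Proof.
  intros LA LB Bw [_ [[a1 [Aa1 w_a1]] [a2 [Aa2 w_a2]]]].
  set (k := countP (adj w) lA). set (m := countP (adj a1) lB).
  assert (degB : forall b, B b -> countP (adj b) lA = k).
  { intros b Bb. apply (invariant_count_const dom_pres b w MB (moving_tuple_stable dom_pres MA));
      auto using adj_invariant. }
  assert (degA : forall a, A a -> countP (adj a) lB = m).
  { intros a Aa. apply (invariant_count_const dom_pres a a1 MA (moving_tuple_stable dom_pres MB));
      auto using adj_invariant. }
  assert (edges : k * length lB = m * length lA).
  { apply (double_counting adj); intros x Ix.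
    - apply degB, HB; auto.
    - rewrite <- (degA x) by (apply HA; auto). apply countP_ext; split; auto. }
  assert (k_pos : 0 < k) by (apply countP_pos; exists a1; rewrite <- HA; auto).
  assert (k_lt : k < length lA) by (apply countP_lt_length; exists a2; rewrite <- HA; auto).
  assert (m_pos : 0 < m) by (apply countP_pos; exists w; rewrite <- HB; auto).
  destruct (small_biregular_degrees LA LB (conj k_pos k_lt) m_pos edges) as [EAB [Emk k_cases]].
  exists k. repeat split; auto. rewrite <- Emk. exact degA.
Qed.

Lemma degree_uncommon_neighbour a k :
  A a -> countP (adj a) lB = k -> 0 < k < length lB -> uncommon_neighbour adj R B a.
Proof.
  intros Aa deg [k_pos k_lt]. rewrite <- deg in k_pos, k_lt.
  apply countP_pos in k_pos as [b [Ib a_b]]. apply countP_lt_length in k_lt as [b' [Ib' a_b']].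
  split; [apply (moving_tuple_not_root a MA Aa)|].
  split; [exists b | exists b']; rewrite HB; auto.
Qed.

End UncommonNeighbours.

Theorem lemma3p1 (V : Type) (adj : V -> V -> Prop) (C : Type)
  (R : V -> Prop) (dom : V -> Prop) (c : V -> C) (A B : V -> Prop) :
  simple_graph adj -> connected_graph adj -> locally_finite adj ->
  domain_preserving adj R dom c ->
  moving_tuple adj R dom c A -> moving_tuple adj R dom c B ->
  at_most 3 A -> at_most 3 B ->
  (exists w, B w /\ uncommon_neighbour adj R A w) ->
  (exists w, A w /\ uncommon_neighbour adj R B w) /\
  exists (f finv : V -> V),
    (forall a, A a -> B (f a)) /\ (forall b, B b -> A (finv b)) /\
    (forall a, A a -> finv (f a) = a) /\ (forall b, B b -> f (finv b) = b) /\
    (forall g, stabiliser adj R dom c g ->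
       forall b, B b -> g b = f (g (finv b))) /\
    (forall g, stabiliser adj R dom c g ->
       forall v, A v -> (g v = v <-> g (f v) = f v)).
Proof.
  intros [_ adj_sym] _ _ dom_pres MA MB A3 B3 [w [Bw Uw]].
  destruct (at_most_NoDup A3) as [lA [NA [LA HA]]].
  destruct (at_most_NoDup B3) as [lB [NB [LB HB]]].
  destruct (uncommon_neighbour_degrees adj_sym dom_pres MA MB NA NB HA HB LA LB Bw Uw)
    as [k [EAB [k_range [k_cases [degB degA]]]]].
  split.
  { destruct Uw as [_ [[a [Aa _]] _]]. exists a. split; [exact Aa|].
    apply (degree_uncommon_neighbour B lB MA HB a Aa (degA a Aa)). lia. }
  destruct (equivariant_bijection (M := degree_matching k adj)
              (moving_tuple_stable dom_pres MA) (moving_tuple_stable dom_pres MB)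
              (invariant_degree_matching k (@adj_invariant _ _ _ _ _ _)))
    as [f [finv [fB [finvA [fK [finvK f_equiv]]]]]].
  - apply degree_matching_sym; auto.
  - intros a Aa. apply degree_matching_partner with lB; auto. lia.
  - intros b Bb. apply degree_matching_partner with lA; auto. lia.
  - exists f, finv. do 4 (split; [assumption|]). split.
    + intros g Sg b Bb. rewrite <- (finvK b Bb) at 1. apply f_equiv; auto.
    + intros g Sg v Av. rewrite f_equiv by auto. split; [congruence|]. intros E.
      rewrite <- (fK (g v)), E, fK; auto. apply (moving_tuple_stable dom_pres MA); auto.
Qed.
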